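(* Let $\mathfrak g$ be a complex vector space equipped with a bilinear multiplication $[\ ,\ ]:\mathfrak g\otimes\mathfrak g\to\mathfrak g$, and let $\tilde{\mathfrak g}=\mathfrak g\oplus\mathbb C$. For $\lambda\in\mathbb C$ define linear maps $\mathfrak R(\lambda),\mathfrak R(\lambda)':\tilde{\mathfrak g}\otimes\tilde{\mathfrak g}\to\tilde{\mathfrak g}\otimes\tilde{\mathfrak g}$ by $$\mathfrak R(\lambda)\big((x+\alpha)\otimes(y+\beta)\big)=(y+\beta)\otimes(x+\alpha)+[x,y]\otimes\lambda,$$ $$\mathfrak R(\lambda)'\big((x+\alpha)\otimes(y+\beta)\big)=(y+\beta)\otimes(x+\alpha)+\lambda\otimes[x,y],$$ for $x,y\in\mathfrak g$, $\alpha,\beta\in\mathbb C$ (here $\lambda$ and $[x,y]$ are regarded as elements of $\tilde{\mathfrak g}$ via $\mathbb C\subset\tilde{\mathfrak g}$ and $\mathfrak g\subset\tilde{\mathfrak g}$). Set $\mathfrak R_{12}(\lambda)=\mathfrak R(\lambda)\otimes 1_{\tilde{\mathfrak g}}$, $\mathfrak R_{23}(\lambda)=1_{\tilde{\mathfrak g}}\otimes\mathfrak R(\lambda)$, and similarly $\mathfrak R_{12}(\lambda)'=\mathfrak R(\lambda)'\otimes 1_{\tilde{\mathfrak g}}$, $\mathfrak R_{23}(\lambda)'=1_{\tilde{\mathfrak g}}\otimes\mathfrak R(\lambda)'$, as endomorphisms of $\tilde{\mathfrak g}^{\otimes 3}$. Then: (a) $\mathfrak R(\lambda)\mathfrak R(\lambda)'=\mathfrak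 R(\lambda)'\mathfrak R(\lambda)=1$ for every $\lambda\in\mathbb C$ if and only if $[\ ,\ ]$ is antisymmetric; (b) $\mathfrak R_{12}(\lambda)\mathfrak R_{23}(\lambda)\mathfrak R_{12}(\lambda)=\mathfrak R_{23}(\lambda)\mathfrak R_{12}(\lambda)\mathfrak R_{23}(\lambda)$ for every $\lambda\in\mathbb C$ if and only if $[\ ,\ ]$ satisfies the Jacobi identity; (c) $\mathfrak R_{12}(\lambda)'\mathfrak R_{23}(\lambda)'\mathfrak R_{12}(\lambda)'=\mathfrak R_{23}(\lambda)'\mathfrak R_{12}(\lambda)'\mathfrak R_{23}(\lambda)'$ for every $\lambda\in\mathbb C$ if and only if $[\ ,\ ]$ satisfies the Jacobi identity.
   Context: All tensor products are over $\mathbb C$. Elements of $\tilde{\mathfrak g}=\mathfrak g\oplus\mathbb C$ are written $x+\alpha$ with $x\in\mathfrak g$, $\alpha\in\mathbb C$. *)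

From HB Require Import structures.
From mathcomp Require Import all_boot all_order all_algebra.
From mathcomp Require Import complex.
From mathcomp Require Import Rstruct.
Set Implicit Arguments. Unset Strict Implicit. Unset Printing Implicit Defensive.
Import Order.TTheory GRing.Theory Num.Theory.
Local Open Scope ring_scope.

Definition CC : fieldType := (complex Rdefinitions.R : fieldType).

Definition bilinear_map (V W U : lmodType CC) (B : V -> W -> U) : Prop :=
  (forall (a : CC) (x x' : V) (y : W), B (a *: x + x') y = a *: B x y + B x' y) /\
  (forall (a : CC) (x : V) (y y' : W), B x (a *: y + y') = a *: B x y + B x y').

Definition trilinear_map (V U : lmodType CC) (T : V -> V -> V -> U) : Prop :=
  (forall (a : CC) x x' y z, T (a *: x + x') y z = a *: T x y z + T x' y z) /\
  (forall (a : CC) x y y' z, T x (a *: y + y') z = a *: T x y z + T x y' z) /\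
  (forall (a : CC) x y z z', T x y (a *: z + z') = a *: T x y z + T x y z').

(* g~ = g (+) C, as the product C-module  V * C. *)
Definition gt (V : lmodType CC) : lmodType CC := (V * (CC^o))%type.

(* Elements of g~ (x) g~ are represented by formal sums of pure tensors,
   i.e. sequences of pairs; two formal sums denote the same element of the
   tensor product iff every bilinear map takes the same value on them
   (universal property of the tensor product). *)
Definition tens2 (V : lmodType CC) := seq (gt V * gt V)%type.
Definition tens3 (V : lmodType CC) := seq (gt V * gt V * gt V)%type.

Definition teq2 (V : lmodType CC) (s t : tens2 V) : Prop :=
  forall (U : lmodType CC) (B : gt V -> gt V -> U), bilinear_map B ->
    \sum_(p <- s) B p.1 p.2 = \sum_(p <- t) B p.1 p.2.

Definition teq3 (V : lmodType CC) (s t : tens3 V) : Prop :=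
  forall (U : lmodType CC) (T : gt V -> gt V -> gt V -> U), trilinear_map T ->
    \sum_(p <- s) T p.1.1 p.1.2 p.2 = \sum_(p <- t) T p.1.1 p.1.2 p.2.

Definition opeq2 (V : lmodType CC) (f g : tens2 V -> tens2 V) : Prop :=
  forall s, teq2 (f s) (g s).
Definition opeq3 (V : lmodType CC) (f g : tens3 V -> tens3 V) : Prop :=
  forall s, teq3 (f s) (g s).

Section Rmaps.
Variables (V : lmodType CC) (br : V -> V -> V).

Definition ing (x : V) : gt V := (x, 0 : CC^o).
Definition inC (a : CC) : gt V := (0 : V, a : CC^o).

Definition Rpure (lam : CC) (u v : gt V) : tens2 V :=
  [:: (v, u); (ing (br u.1 v.1), inC lam)].
Definition Rpure' (lam : CC) (u v : gt V) : tens2 V :=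
  [:: (v, u); (inC lam, ing (br u.1 v.1))].

Definition ext2 (f : gt V -> gt V -> tens2 V) (s : tens2 V) : tens2 V :=
  flatten [seq f p.1 p.2 | p <- s].

Definition RR (lam : CC) := ext2 (Rpure lam).
Definition RR' (lam : CC) := ext2 (Rpure' lam).

Definition op12 (f : gt V -> gt V -> tens2 V) (s : tens3 V) : tens3 V :=
  flatten [seq [seq (q.1, q.2, p.2) | q <- f p.1.1 p.1.2] | p <- s].
Definition op23 (f : gt V -> gt V -> tens2 V) (s : tens3 V) : tens3 V :=
  flatten [seq [seq (p.1.1, q.1, q.2) | q <- f p.1.2 p.2] | p <- s].

Definition R12 (lam : CC) := op12 (Rpure lam).
Definition R23 (lam : CC) := op23 (Rpure lam).
Definition R12' (lam : CC) := op12 (Rpure' lam).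
Definition R23' (lam : CC) := op23 (Rpure' lam).
End Rmaps.

Definition antisymmetric_br (V : lmodType CC) (br : V -> V -> V) : Prop :=
  forall x y, br x y = - br y x.

Definition jacobi_left (V : lmodType CC) (br : V -> V -> V) : Prop :=
  forall x y z, br x (br y z) = br (br x y) z + br y (br x z).

Definition jacobi_right (V : lmodType CC) (br : V -> V -> V) : Prop :=
  forall x y z, br (br x y) z = br (br x z) y + br x (br y z).

(* Every operator involved is the linear extension of its values on pure
   tensors, so each identity reduces to pure tensors.  There the two sides
   agree except for a single summand lying in g (x) C for (a), in
   g (x) C (x) C for (b) and in C (x) C (x) g for (c); its g-component is
   [x,y] + [y,x], resp. the difference of the two sides of the Jacobi
   identity.  Evaluating with the projection onto that summand gives the
   converse implications. *)

From mathcomp Require Import all_boot all_algebra.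
Local Open Scope ring_scope.
Import GRing.Theory.
Set Implicit Arguments.
Unset Strict Implicit.
Unset Printing Implicit Defensive.

Arguments inC {V}.

Section LinearFun.
Variables (U W : lmodType CC) (f : U -> W).
Hypothesis hf : linear f.
Lemma linear_fun0 : f 0 = 0.
Proof. by have := hf (-1) 0 0; rewrite scaler0 addr0 scaleN1r addNr. Qed.
Lemma linear_funD x y : f (x + y) = f x + f y.
Proof. by have := hf 1 x y; rewrite !scale1r. Qed.
End LinearFun.

Section Bilinear.
Variables (U1 U2 W : lmodType CC) (B : U1 -> U2 -> W).
Hypothesis hB : bilinear_map B.
Lemma bilinear_linearl y : linear (B^~ y). Proof. by move=> a x x'; case: hB. Qed.
Lemma bilinear_linearr x : linear (B x). Proof. by move=> a y y'; case: hB. Qed.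
Lemma bilinear0l y : B 0 y = 0. Proof. exact: linear_fun0 (bilinear_linearl y). Qed.
Lemma bilinear0r x : B x 0 = 0. Proof. exact: linear_fun0 (bilinear_linearr x). Qed.
Lemma bilinearDl x x' y : B (x + x') y = B x y + B x' y.
Proof. exact: (linear_funD (bilinear_linearl y) x x'). Qed.
Lemma bilinearDr x y y' : B x (y + y') = B x y + B x y'.
Proof. exact: (linear_funD (bilinear_linearr x) y y'). Qed.
End Bilinear.

Section Trilinear.
Variables (U W : lmodType CC) (T : U -> U -> U -> W).
Hypothesis hT : trilinear_map T.
Lemma trilinear_linear1 y z : linear (fun x => T x y z).
Proof. by move=> a x x'; case: hT. Qed.
Lemma trilinear_linear2 x z : linear (fun y => T x y z).
Proof. by move=> a y y'; case: hT => _ []. Qed.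
Lemma trilinear_linear3 x y : linear (T x y).
Proof. by move=> a z z'; case: hT => _ []. Qed.
Lemma trilinear0_1 y z : T 0 y z = 0. Proof. exact: linear_fun0 (trilinear_linear1 y z). Qed.
Lemma trilinear0_2 x z : T x 0 z = 0. Proof. exact: linear_fun0 (trilinear_linear2 x z). Qed.
Lemma trilinear0_3 x y : T x y 0 = 0. Proof. exact: linear_fun0 (trilinear_linear3 x y). Qed.
Lemma trilinearD1 x x' y z : T (x + x') y z = T x y z + T x' y z.
Proof. exact: (linear_funD (trilinear_linear1 y z) x x'). Qed.
Lemma trilinearD3 x y z z' : T x y (z + z') = T x y z + T x y z'.
Proof. exact: (linear_funD (trilinear_linear3 x y) z z'). Qed.
End Trilinear.

Definition cat_morphism (A B : Type) (F : seq A -> seq B) :=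
  F [::] = [::] /\ {morph F : s t / s ++ t}.

Lemma cat_morphism_flatten_map (A B : Type) (g : A -> seq B) :
  cat_morphism (fun s => flatten (map g s)).
Proof. by split=> // s t; rewrite map_cat flatten_cat. Qed.

Lemma cat_morphism_comp (A B C : Type) (F : seq B -> seq C) (G : seq A -> seq B) :
  cat_morphism F -> cat_morphism G -> cat_morphism (fun s => F (G s)).
Proof. by move=> [F0 FD] [G0 GD]; split=> [|s t]; rewrite ?G0 ?F0 // GD FD. Qed.

Lemma big_cat_morphism (A B : Type) (U : nmodType) (F : seq A -> seq B) (G : B -> U) :
  cat_morphism F ->
  forall s, \sum_(q <- F s) G q = \sum_(p <- s) \sum_(q <- F [:: p]) G q.
Proof.
move=> [F0 FD]; elim=> [|p s IH]; first by rewrite F0 !big_nil.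
by rewrite -cat1s FD big_cat IH big_cons.
Qed.

Section PureTensors.
Variable V : lmodType CC.

Lemma opeq2_pure (F G : tens2 V -> tens2 V) :
  cat_morphism F -> cat_morphism G -> (forall p, teq2 (F [:: p]) (G [:: p])) -> opeq2 F G.
Proof.
move=> hF hG FG s U B hB.
rewrite (big_cat_morphism _ hF) (big_cat_morphism _ hG).
by apply: eq_bigr => p _; apply: FG.
Qed.

Lemma opeq3_pure (F G : tens3 V -> tens3 V) :
  cat_morphism F -> cat_morphism G -> (forall p, teq3 (F [:: p]) (G [:: p])) -> opeq3 F G.
Proof.
move=> hF hG FG s U T hT.
rewrite (big_cat_morphism _ hF) (big_cat_morphism _ hG).
by apply: eq_bigr => p _; apply: FG.
Qed.

Lemma cat_morphism_ext2 (f : gt V -> gt V -> tens2 V) : cat_morphism (ext2 f).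
Proof. exact: cat_morphism_flatten_map. Qed.
Lemma cat_morphism_op12 (f : gt V -> gt V -> tens2 V) : cat_morphism (op12 f).
Proof. exact: cat_morphism_flatten_map. Qed.
Lemma cat_morphism_op23 (f : gt V -> gt V -> tens2 V) : cat_morphism (op23 f).
Proof. exact: cat_morphism_flatten_map. Qed.
End PureTensors.

Section PureTensorComputations.
Variables (V : lmodType CC) (br : V -> V -> V).
Hypothesis hbr : bilinear_map br.

Lemma ingD (x y : V) : ing (x + y) = ing x + ing y.
Proof. by rewrite /ing; congr pair; rewrite addr0. Qed.

Lemma RR_RR'_pure (U : lmodType CC) (B : gt V -> gt V -> U)
    (hB : bilinear_map B) lam u v :
  \sum_(p <- RR br lam (RR' br lam [:: (u, v)])) B p.1 p.2
  = B u v + B (ing (br v.1 u.1 + br u.1 v.1)) (inC lam).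
Proof.
rewrite /= !big_cons big_nil /= (bilinear0l hbr) (bilinear0l hB) !addr0.
by rewrite ingD (bilinearDl hB).
Qed.

Lemma RR'_RR_pure (U : lmodType CC) (B : gt V -> gt V -> U)
    (hB : bilinear_map B) lam u v :
  \sum_(p <- RR' br lam (RR br lam [:: (u, v)])) B p.1 p.2
  = B u v + B (inC lam) (ing (br v.1 u.1 + br u.1 v.1)).
Proof.
rewrite /= !big_cons big_nil /= (bilinear0r hbr) (bilinear0r hB) !addr0.
by rewrite ingD (bilinearDr hB).
Qed.

Lemma R12R23R12_pure (U : lmodType CC) (T : gt V -> gt V -> gt V -> U)
    (hT : trilinear_map T) lam u v w :
 \sum_(p <- R12 br lam (R23 br lam (R12 br lam [:: (u, v, w)]))) T p.1.1 p.1.2 p.2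
   + T (ing (br u.1 (br v.1 w.1))) (inC lam) (inC lam)
 = \sum_(p <- R23 br lam (R12 br lam (R23 br lam [:: (u, v, w)]))) T p.1.1 p.1.2 p.2
   + T (ing (br (br u.1 v.1) w.1 + br v.1 (br u.1 w.1))) (inC lam) (inC lam).
Proof.
rewrite /= !big_cons big_nil /= !(bilinear0l hbr, bilinear0r hbr).
rewrite !(trilinear0_1 hT, trilinear0_2 hT, trilinear0_3 hT) !(addr0, add0r).
by rewrite ingD (trilinearD1 hT) !addrA (ACl (1*5*3*2*7*6*4)).
Qed.

Lemma R12'R23'R12'_pure (U : lmodType CC) (T : gt V -> gt V -> gt V -> U)
    (hT : trilinear_map T) lam u v w :
 \sum_(p <- R12' br lam (R23' br lam (R12' br lam [:: (u, v, w)]))) T p.1.1 p.1.2 p.2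
   + T (inC lam) (inC lam) (ing (br (br u.1 w.1) v.1 + br u.1 (br v.1 w.1)))
 = \sum_(p <- R23' br lam (R12' br lam (R23' br lam [:: (u, v, w)]))) T p.1.1 p.1.2 p.2
   + T (inC lam) (inC lam) (ing (br (br u.1 v.1) w.1)).
Proof.
rewrite /= !big_cons big_nil /= !(bilinear0l hbr, bilinear0r hbr).
rewrite !(trilinear0_1 hT, trilinear0_2 hT, trilinear0_3 hT) !(addr0, add0r).
by rewrite ingD (trilinearD3 hT) !addrA (ACl (1*4*3*6*2*7*5)).
Qed.
End PureTensorComputations.

Section Projections.
Variable V : lmodType CC.

Definition proj_gC (p q : gt V) : V := q.2 *: p.1.
Definition proj_gCC (p q r : gt V) : V := (q.2 * r.2) *: p.1.
Definition proj_CCg (p q r : gt V) : V := (p.2 * q.2) *: r.1.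

Lemma proj_gC_bilinear : bilinear_map proj_gC.
Proof.
by split=> a x x' y; rewrite /proj_gC /= ?scalerDr ?scalerDl !scalerA // mulrC.
Qed.

Lemma proj_gCC_trilinear : trilinear_map proj_gCC.
Proof.
split; [|split]=> a x y z w; rewrite /proj_gCC /=.
- by rewrite scalerDr !scalerA mulrC.
- by rewrite mulrDl scalerDl -mulrA scalerA.
- by rewrite mulrDr scalerDl mulrCA scalerA.
Qed.

Lemma proj_CCg_trilinear : trilinear_map proj_CCg.
Proof.
split; [|split]=> a x y z w; rewrite /proj_CCg /=.
- by rewrite mulrDl scalerDl -mulrA scalerA.
- by rewrite mulrDr scalerDl mulrCA scalerA.
- by rewrite scalerDr !scalerA mulrC.
Qed.
End Projections.

Section Equivalences.
Variables (V : lmodType CC) (br : V -> V -> V).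
Hypothesis hbr : bilinear_map br.

Lemma R_inverse_iff_antisymmetric :
  (forall lam : CC,
      opeq2 (fun s => RR br lam (RR' br lam s)) id /\
      opeq2 (fun s => RR' br lam (RR br lam s)) id)
    <-> antisymmetric_br br.
Proof.
split=> [Rinv x y | anti lam].
  have := (Rinv 1).1 [:: (ing y, ing x)] V _ (proj_gC_bilinear V).
  rewrite (RR_RR'_pure hbr (proj_gC_bilinear V)) big_seq1 /proj_gC /=.
  rewrite scale0r scale1r add0r => /eqP.
  by rewrite addr_eq0 => /eqP.
have anti0 u v : br v u + br u v = 0 by rewrite anti addNr.
have cat_id : cat_morphism (@id (tens2 V)) by [].
split; apply: opeq2_pure => // [|[u v] U B hB].
- exact: cat_morphism_comp (cat_morphism_ext2 _) (cat_morphism_ext2 _).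
- by rewrite (RR_RR'_pure hbr hB) anti0 (bilinear0l hB) addr0 big_seq1.
- exact: cat_morphism_comp (cat_morphism_ext2 _) (cat_morphism_ext2 _).
- by rewrite (RR'_RR_pure hbr hB) anti0 (bilinear0r hB) addr0 big_seq1.
Qed.

Lemma cat_morphism_braid (f : gt V -> gt V -> tens2 V) :
  cat_morphism (fun s => op12 f (op23 f (op12 f s))) /\
  cat_morphism (fun s => op23 f (op12 f (op23 f s))).
Proof.
have [h12 h23] := (cat_morphism_op12 f, cat_morphism_op23 f).
by split; apply: cat_morphism_comp => //; apply: cat_morphism_comp.
Qed.

Lemma R_braid_iff_jacobi_left :
  (forall lam : CC,
      opeq3 (fun s => R12 br lam (R23 br lam (R12 br lam s)))
            (fun s => R23 br lam (R12 br lam (R23 br lam s))))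
    <-> jacobi_left br.
Proof.
split=> [braid x y z | jac lam].
  have := R12R23R12_pure hbr (proj_gCC_trilinear V) 1 (ing x) (ing y) (ing z).
  rewrite (braid _ _ _ _ (proj_gCC_trilinear V)) /proj_gCC /=.
  by rewrite mulr1 !scale1r => /addrI.
have [F G] := cat_morphism_braid (Rpure br lam).
apply: opeq3_pure => // -[[u v] w] U T hT.
by have := R12R23R12_pure hbr hT lam u v w; rewrite -jac => /addIr.
Qed.

Lemma R'_braid_iff_jacobi_right :
  (forall lam : CC,
      opeq3 (fun s => R12' br lam (R23' br lam (R12' br lam s)))
            (fun s => R23' br lam (R12' br lam (R23' br lam s))))
    <-> jacobi_right br.
Proof.
split=> [braid x y z | jac lam].
  have := R12'R23'R12'_pure hbr (proj_CCg_trilinear V) 1 (ing x) (ing y) (ing z).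
  rewrite (braid _ _ _ _ (proj_CCg_trilinear V)) /proj_CCg /=.
  by rewrite mulr1 !scale1r => /addrI.
have [F G] := cat_morphism_braid (Rpure' br lam).
apply: opeq3_pure => // -[[u v] w] U T hT.
by have := R12'R23'R12'_pure hbr hT lam u v w; rewrite -jac => /addIr.
Qed.
End Equivalences.

Theorem lemma1p1p1 (V : lmodType CC) (br : V -> V -> V)
  (hbr : bilinear_map br) :
  ((forall lam : CC,
      opeq2 (fun s => RR br lam (RR' br lam s)) id /\
      opeq2 (fun s => RR' br lam (RR br lam s)) id)
    <-> antisymmetric_br br) /\
  ((forall lam : CC,
      opeq3 (fun s => R12 br lam (R23 br lam (R12 br lam s)))
            (fun s => R23 br lam (R12 br lam (R23 br lam s))))
    <-> jacobi_left br) /\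
  ((forall lam : CC,
      opeq3 (fun s => R12' br lam (R23' br lam (R12' br lam s)))
            (fun s => R23' br lam (R12' br lam (R23' br lam s))))
    <-> jacobi_right br).
Proof.
split; first exact: R_inverse_iff_antisymmetric.
by split; [exact: R_braid_iff_jacobi_left | exact: R'_braid_iff_jacobi_right].
Qed.
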